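(* Let $\mathbf{H}$ be any one of the four history systems $\mathbf{G3N}^{Hist}$, $\mathbf{G3NeF}^{Hist}$, $\mathbf{G3CoPC}^{Hist}$, $\mathbf{G3MPC}^{Hist}$. Contraction is admissible in $\mathbf{H}$: for every finite set of formulas $\mathcal H$, finite multiset $\Gamma$ and formulas $\alpha,\varphi$, if $\mathcal H\mid\Gamma,\alpha,\alpha\Rightarrow\varphi$ is derivable in $\mathbf{H}$, then $\mathcal H\mid\Gamma,\alpha\Rightarrow\varphi$ is derivable in $\mathbf{H}$.
   Context: Formulas are generated from a countable set of propositional variables $p,q,\dots$ and the constant $\top$ by the grammar $\varphi::= p\mid\top\mid\varphi\wedge\varphi\mid\varphi\vee\varphi\mid\varphi\to\varphi\mid\neg\varphi$ (there is no constant $\bot$). A history sequent is an expression $\mathcal H\mid\Gamma\Rightarrow\varphi$ where $\mathcal H$ (the history) is a finite set of formulas, $\Gamma$ is a finite multiset of formulas and $\varphi$ is a formula (the goal). $(\psi,\mathcal H)$ denotes $\mathcal H\cup\{\psi\}$, $\emptyset$ is the empty history, $\Gamma,\alpha$ denotes $\Gamma$ with one more occurrence of $\alpha$, and ''$\alpha\in\Gamma$'' means $\alpha$ occurs in $\Gamma$. History rules ($p$ a propositional variable; side conditions after ''if''): (ax) $\mathcal H\mid\Gamma,p\Rightarrow p$; ($\top$) $\mathcal H\mid\Gamma\Rightarrow\top$; ($\to$r$_1$) from $\emptyset\mid\Gamma,\alpha\Rightarrow\beta$ infer $\mathcal H\mid\Gamma\Rightarrow\alpha\to\beta$, if $\alpha\notin\Gamma$;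 ($\to$r$_2$) from $\mathcal H\mid\Gamma\Rightarrow\beta$ infer $\mathcal H\mid\Gamma\Rightarrow\alpha\to\beta$, if $\alpha\in\Gamma$; ($\to$l) from $(\varphi,\mathcal H)\mid\Gamma,\alpha\to\beta\Rightarrow\alpha$ and $\emptyset\mid\Gamma,\alpha\to\beta,\beta\Rightarrow\varphi$ infer $\mathcal H\mid\Gamma,\alpha\to\beta\Rightarrow\varphi$, if $\varphi\notin\mathcal H$ and $\beta\notin\Gamma$; ($\wedge$r) from $\mathcal H\mid\Gamma\Rightarrow\alpha$ and $\mathcal H\mid\Gamma\Rightarrow\beta$ infer $\mathcal H\mid\Gamma\Rightarrow\alpha\wedge\beta$; ($\wedge$l$_1$) from $\emptyset\mid\Gamma,\alpha\wedge\beta,\alpha\Rightarrow\varphi$ infer $\mathcal H\mid\Gamma,\alpha\wedge\beta\Rightarrow\varphi$, if $\alpha\notin\Gamma$; ($\wedge$l$_2$) from $\emptyset\mid\Gamma,\alpha\wedge\beta,\beta\Rightarrow\varphi$ infer $\mathcal H\mid\Gamma,\alpha\wedge\beta\Rightarrow\varphi$, if $\beta\notin\Gamma$; ($\vee$r$_1$), ($\vee$r$_2$) from $\mathcal H\mid\Gamma\Rightarrow\alpha$ (resp. $\mathcal H\mid\Gamma\Rightarrow\beta$) infer $\mathcal H\mid\Gamma\Rightarrow\alpha\vee\beta$; ($\vee$l) from $\emptyset\mid\Gamma,\alpha\vee\beta,\alpha\Rightarrow\varphi$ and $\emptyset\mid\Gamma,\alpha\vee\beta,\beta\Rightarrow\varphi$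 infer $\mathcal H\mid\Gamma,\alpha\vee\beta\Rightarrow\varphi$, if $\alpha,\beta\notin\Gamma$; (n$_1$) from $\emptyset\mid\Gamma,\neg\alpha,\beta\Rightarrow\alpha$ and $\emptyset\mid\Gamma,\neg\alpha,\alpha\Rightarrow\beta$ infer $\mathcal H\mid\Gamma,\neg\alpha\Rightarrow\neg\beta$, if $\beta\notin\Gamma\cup\{\neg\alpha\}$ and $\alpha\notin\Gamma$; (n$_2$) from $\emptyset\mid\Gamma,\neg\alpha,\beta\Rightarrow\alpha$ and $\mathcal H\mid\Gamma,\neg\alpha\Rightarrow\beta$ infer $\mathcal H\mid\Gamma,\neg\alpha\Rightarrow\neg\beta$, if $\beta\notin\Gamma\cup\{\neg\alpha\}$ and $\alpha\in\Gamma$; (n$_3$) from $(\neg\beta,\mathcal H)\mid\Gamma,\neg\alpha\Rightarrow\alpha$ and $\emptyset\mid\Gamma,\neg\alpha,\alpha\Rightarrow\beta$ infer $\mathcal H\mid\Gamma,\neg\alpha\Rightarrow\neg\beta$, if $\neg\beta\notin\mathcal H$, $\beta\in\Gamma\cup\{\neg\alpha\}$ and $\alpha\notin\Gamma$; (n$_4$) from $(\neg\beta,\mathcal H)\mid\Gamma,\neg\alpha\Rightarrow\alpha$ and $\mathcal H\mid\Gamma,\neg\alpha\Rightarrow\beta$ infer $\mathcal H\mid\Gamma,\neg\alpha\Rightarrow\neg\beta$, if $\neg\beta\notin\mathcal H$, $\beta\in\Gamma\cup\{\neg\alpha\}$ and $\alpha\in\Gamma$; (nef) from $(\neg\beta,\mathcal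 H)\mid\Gamma,\neg\alpha\Rightarrow\alpha$ infer $\mathcal H\mid\Gamma,\neg\alpha\Rightarrow\neg\beta$, if $\neg\beta\notin\mathcal H$; (copc$_1$) from $\emptyset\mid\Gamma,\neg\alpha,\beta\Rightarrow\alpha$ infer $\mathcal H\mid\Gamma,\neg\alpha\Rightarrow\neg\beta$, if $\beta\notin\Gamma\cup\{\neg\alpha\}$; (copc$_2$) from $(\neg\beta,\mathcal H)\mid\Gamma,\neg\alpha\Rightarrow\alpha$ infer $\mathcal H\mid\Gamma,\neg\alpha\Rightarrow\neg\beta$, if $\neg\beta\notin\mathcal H$ and $\beta\in\Gamma\cup\{\neg\alpha\}$; (an) from $\emptyset\mid\Gamma,\alpha\Rightarrow\neg\alpha$ infer $\mathcal H\mid\Gamma\Rightarrow\neg\alpha$, if $\alpha\notin\Gamma$. In addition, the left rules ($\to$l), ($\wedge$l$_1$), ($\wedge$l$_2$), ($\vee$l) may only be applied when the goal $\varphi$ of the conclusion is a propositional variable, a negation or a disjunction. The positive history rules are (ax) through ($\vee$l). The four history systems are: $\mathbf{G3N}^{Hist}$ = positive history rules + (n$_1$)–(n$_4$); $\mathbf{G3NeF}^{Hist}$ = positive history rules + (n$_1$)–(n$_4$) + (nef); $\mathbf{G3CoPC}^{Hist}$ = positive history rules + (copc$_1$), (copc$_2$); $\mathbf{G3MPC}^{Hist}$ = positive history rules + (copc$_1$), (copc$_2$), (an). A derivation is a finite tree of rule instances whose leaves are instances of (ax) or ($\top$). *)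

From Stdlib Require Import List Permutation.
Import ListNotations.

Inductive form : Type :=
| Var : nat -> form
| Top : form
| And : form -> form -> form
| Or  : form -> form -> form
| Imp : form -> form -> form
| Neg : form -> form.

Inductive system : Type := G3N | G3NeF | G3CoPC | G3MPC.

(* which negation rules each system contains *)
Definition has_n (S : system) : Prop := S = G3N \/ S = G3NeF.
Definition has_nef (S : system) : Prop := S = G3NeF.
Definition has_copc (S : system) : Prop := S = G3CoPC \/ S = G3MPC.
Definition has_an (S : system) : Prop := S = G3MPC.

Definition lgoal (f : form) : Prop :=
  match f with Var _ | Neg _ | Or _ _ => True | _ => False end.

(* The history H is a finite set represented by a list (only membership
   matters); the antecedent D is a finite multiset represented by a list
   (a rule's conclusion  Gamma, alpha  is any list that is a permutation
   of alpha :: Gamma). *)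
Inductive deriv (S : system) : list form -> list form -> form -> Prop :=
| d_ax H G p : In (Var p) G -> deriv S H G (Var p)
| d_top H G : deriv S H G Top
| d_impr1 H G a b :
    ~ In a G -> deriv S [] (a :: G) b -> deriv S H G (Imp a b)
| d_impr2 H G a b :
    In a G -> deriv S H G b -> deriv S H G (Imp a b)
| d_impl H G D a b f :
    Permutation D (Imp a b :: G) -> lgoal f -> ~ In f H -> ~ In b G ->
    deriv S (f :: H) D a -> deriv S [] (b :: D) f -> deriv S H D f
| d_andr H G a b :
    deriv S H G a -> deriv S H G b -> deriv S H G (And a b)
| d_andl1 H G D a b f :
    Permutation D (And a b :: G) -> lgoal f -> ~ In a G ->
    deriv S [] (a :: D) f -> deriv S H D f
| d_andl2 H G D a b f :
    Permutation D (And a b :: G) -> lgoal f -> ~ In b G ->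
    deriv S [] (b :: D) f -> deriv S H D f
| d_orr1 H G a b : deriv S H G a -> deriv S H G (Or a b)
| d_orr2 H G a b : deriv S H G b -> deriv S H G (Or a b)
| d_orl H G D a b f :
    Permutation D (Or a b :: G) -> lgoal f -> ~ In a G -> ~ In b G ->
    deriv S [] (a :: D) f -> deriv S [] (b :: D) f -> deriv S H D f
| d_n1 H G D a b :
    has_n S -> Permutation D (Neg a :: G) ->
    ~ In b G -> b <> Neg a -> ~ In a G ->
    deriv S [] (b :: D) a -> deriv S [] (a :: D) b -> deriv S H D (Neg b)
| d_n2 H G D a b :
    has_n S -> Permutation D (Neg a :: G) ->
    ~ In b G -> b <> Neg a -> In a G ->
    deriv S [] (b :: D) a -> deriv S H D b -> deriv S H D (Neg b)
| d_n3 H G D a b :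
    has_n S -> Permutation D (Neg a :: G) ->
    ~ In (Neg b) H -> (In b G \/ b = Neg a) -> ~ In a G ->
    deriv S (Neg b :: H) D a -> deriv S [] (a :: D) b -> deriv S H D (Neg b)
| d_n4 H G D a b :
    has_n S -> Permutation D (Neg a :: G) ->
    ~ In (Neg b) H -> (In b G \/ b = Neg a) -> In a G ->
    deriv S (Neg b :: H) D a -> deriv S H D b -> deriv S H D (Neg b)
| d_nef H G D a b :
    has_nef S -> Permutation D (Neg a :: G) ->
    ~ In (Neg b) H ->
    deriv S (Neg b :: H) D a -> deriv S H D (Neg b)
| d_copc1 H G D a b :
    has_copc S -> Permutation D (Neg a :: G) ->
    ~ In b G -> b <> Neg a ->
    deriv S [] (b :: D) a -> deriv S H D (Neg b)
| d_copc2 H G D a b :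
    has_copc S -> Permutation D (Neg a :: G) ->
    ~ In (Neg b) H -> (In b G \/ b = Neg a) ->
    deriv S (Neg b :: H) D a -> deriv S H D (Neg b)
| d_an H G a :
    has_an S -> ~ In a G ->
    deriv S [] (a :: G) (Neg a) -> deriv S H G (Neg a).

From Stdlib Require Import List Permutation Lia.
Import ListNotations.

(* Contraction is admissible because derivability in every history system
   depends on the antecedent only through the SET of formulas occurring in it.

   Indeed, every side condition of every rule is a membership test, and a
   left rule with principal formula x is applied to an antecedent D through a
   decomposition  D ~ x :: G  in which only the membership of formulas other
   than x in G is ever consulted.  If D' has the same elements as D, then x
   also occurs in D', and removing one occurrence of it yields a context G'
   that agrees with G on all formulas different from x (transfer_principal).
   The side conditions compared with x are never about x itself, because a
   formula differs from each of its immediate subformulas (neq_of_fsize).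
   An induction on derivations then shows that derivable sequents are closed
   under replacing the antecedent by one with the same elements
   (deriv_same_elems); contraction is the instance  a, a, G  ~  a, G. *)

(* Number of connectives and atoms; used only to separate a formula from its
   proper subformulas. *)
Fixpoint fsize (x : form) : nat :=
  match x with
  | Var _ | Top => 1
  | And a b | Or a b | Imp a b => S (fsize a + fsize b)
  | Neg a => S (fsize a)
  end.

Lemma neq_of_fsize (x y : form) : fsize x < fsize y -> x <> y.
Proof. intros Hlt ->; lia. Qed.

Definition form_eq_dec (x y : form) : {x = y} + {x <> y}.
Proof. decide equality; apply PeanoNat.Nat.eq_dec. Defined.

Definition same_elems (D D' : list form) : Prop := incl D D' /\ incl D' D.

Lemma same_elems_cons (x : form) (D D' : list form) :
  same_elems D D' -> same_elems (x :: D) (x :: D').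
Proof. intros [HDD' HD'D]; split; apply incl_cons; simpl; auto using incl_tl. Qed.

Lemma transfer_principal (x : form) (G D D' : list form) :
  Permutation D (x :: G) -> same_elems D D' ->
  exists G', Permutation D' (x :: G') /\
             forall y, y <> x -> (In y G' <-> In y G).
Proof.
  intros HP [HDD' HD'D].
  assert (Hx : In x D') by (apply HDD'; rewrite HP; left; reflexivity).
  apply in_split in Hx as (l1 & l2 & ->).
  exists (l1 ++ l2); split; [symmetry; apply Permutation_middle |].
  intros y Hyx.
  assert (Hdrop : forall l, In y (x :: l) <-> In y l)
    by (intro l; simpl; split; [intros [E | Hy]; [congruence | exact Hy] | auto]).
  rewrite <- Hdrop, <- (Hdrop G), <- HP, (Permutation_middle l1 l2 x).
  split; [apply HD'D | apply HDD'].
Qed.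

Ltac transfer_principal_in Hs :=
  match goal with
  | HP : Permutation _ (_ :: _) |- _ =>
      destruct (transfer_principal _ _ _ _ HP Hs) as (G' & HP' & HG')
  end.

Ltac side_condition :=
  match goal with
  | HG' : forall y, y <> ?x -> (In y ?G' <-> In y ?G) |- ~ In ?y ?G' =>
      rewrite HG'; [assumption | first [assumption | apply neq_of_fsize; simpl; lia]]
  | HG' : forall y, y <> ?x -> (In y ?G' <-> In y ?G) |- In ?y ?G' =>
      rewrite HG'; [assumption | apply neq_of_fsize; simpl; lia]
  | HG' : forall y, y <> ?x -> (In y ?G' <-> In y ?G),
    Hor : In ?b ?G \/ ?b = ?x |- In ?b ?G' \/ ?b = ?x =>
      destruct (form_eq_dec b x) as [Heq | Hne];
      [right; exact Heq | left; rewrite HG' by exact Hne; destruct Hor; [assumption | contradiction]]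
  end.

Lemma deriv_same_elems (S : system) (H D : list form) (f : form) :
  deriv S H D f -> forall D', same_elems D D' -> deriv S H D' f.
Proof.
  induction 1; intros D' Hs; try transfer_principal_in Hs.
  - apply d_ax, (proj1 Hs); assumption.
  - apply d_top.
  - apply d_impr1; [intro Ha; apply (proj2 Hs) in Ha; contradiction |].
    apply IHderiv, same_elems_cons, Hs.
  - apply d_impr2; [apply (proj1 Hs); assumption | apply IHderiv, Hs].
  - eapply d_impl; [exact HP' | assumption | assumption | side_condition | |].
    + apply IHderiv1, Hs.
    + apply IHderiv2, same_elems_cons, Hs.
  - apply d_andr; [apply IHderiv1 | apply IHderiv2]; exact Hs.
  - eapply d_andl1; [exact HP' | assumption | side_condition |].
    apply IHderiv, same_elems_cons, Hs.
  - eapply d_andl2; [exact HP' | assumption | side_condition |].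
    apply IHderiv, same_elems_cons, Hs.
  - apply d_orr1, IHderiv, Hs.
  - apply d_orr2, IHderiv, Hs.
  - eapply d_orl; [exact HP' | assumption | side_condition | side_condition | |].
    + apply IHderiv1, same_elems_cons, Hs.
    + apply IHderiv2, same_elems_cons, Hs.
  - eapply d_n1; [assumption | exact HP' | side_condition | assumption | side_condition | |].
    + apply IHderiv1, same_elems_cons, Hs.
    + apply IHderiv2, same_elems_cons, Hs.
  - eapply d_n2; [assumption | exact HP' | side_condition | assumption | side_condition | |].
    + apply IHderiv1, same_elems_cons, Hs.
    + apply IHderiv2, Hs.
  - eapply d_n3; [assumption | exact HP' | assumption | side_condition | side_condition | |].
    + apply IHderiv1, Hs.
    + apply IHderiv2, same_elems_cons, Hs.
  - eapply d_n4; [assumption | exact HP' | assumption | side_condition | side_condition | |].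
    + apply IHderiv1, Hs.
    + apply IHderiv2, Hs.
  - eapply d_nef; [assumption | exact HP' | assumption |]. apply IHderiv, Hs.
  - eapply d_copc1; [assumption | exact HP' | side_condition | assumption |].
    apply IHderiv, same_elems_cons, Hs.
  - eapply d_copc2; [assumption | exact HP' | assumption | side_condition |].
    apply IHderiv, Hs.
  - apply d_an; [assumption | intro Ha; apply (proj2 Hs) in Ha; contradiction |].
    apply IHderiv, same_elems_cons, Hs.
Qed.

Theorem lemma5p3 (S : system) (H G : list form) (a f : form) :
  deriv S H (a :: a :: G) f -> deriv S H (a :: G) f.
Proof.
  intro Hd. apply (deriv_same_elems _ _ _ _ Hd).
  split; intros y Hy; simpl in *; tauto.
Qed.
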